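(* Under the triangle scaling property with constant $G\ge1$, the iterates of acc-BPP3 satisfy, for every $k\ge0$ and every $\lambda\in\Lambda$, $$d(\lambda)-d(\lambda_{k+1})\le\frac{G\,D_h(\lambda,\lambda_0)}{S_k}=\frac{\theta_k^2\,G\,D_h(\lambda,\lambda_0)}{\eta_k},\qquad S_k=\sum_{j=0}^k\frac{\eta_j}{\theta_j}.$$
   Context: $\Lambda\subseteq\mathbb{R}^m$ closed convex, $d:\Lambda\to\mathbb{R}$ concave. $h$ strictly convex, continuously differentiable on $\Lambda$, $D_h(\lambda,\tilde\lambda)=h(\lambda)-h(\tilde\lambda)-\nabla h(\tilde\lambda)^\top(\lambda-\tilde\lambda)$. Triangle scaling property with constant $G$: $D_h((1-\theta)\lambda+\theta\lambda_1,(1-\theta)\lambda+\theta\lambda_2)\le G\theta^2D_h(\lambda_1,\lambda_2)$ for all $\lambda,\lambda_1,\lambda_2\in\Lambda$, $\theta\in[0,1]$. Algorithm acc-BPP3: given $\lambda_0\in\Lambda$, $v_0=\lambda_0$, $\theta_0=1$, $\eta_k>0$; for $k\ge0$: $y_k=\theta_kv_k+(1-\theta_k)\lambda_k$; $\lambda_{k+1}\in\arg\max_{\lambda\in\Lambda}\{d(\lambda)-\frac1{\eta_k}D_h(\lambda,y_k)\}$; $v_{k+1}\in\arg\max_{\lambda\in\Lambda}\big\{-GD_h(\lambda,\lambda_0)+\sum_{j=0}^k\frac{\eta_j}{\theta_j}\big(d(\lambda_{j+1})+\frac1{\eta_j}(\nabla h(\lambda_{j+1})-\nabla h(y_j))^\top(\lambda-\lambda_{j+1})\big)\big\}$;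 $\theta_{k+1}\in(0,1]$ is defined by $\frac{\eta_k}{\theta_k^2}=\frac{\eta_{k+1}}{\theta_{k+1}^2}-\frac{\eta_{k+1}}{\theta_{k+1}}$. All maximizers are assumed to exist. *)

(* R^m is rendered as 'rV[R]_m over an arbitrary real field R. *)
From HB Require Import structures.
From mathcomp Require Import all_boot all_order all_algebra.
Set Implicit Arguments. Unset Strict Implicit. Unset Printing Implicit Defensive.
Import Order.TTheory GRing.Theory Num.Theory.
Local Open Scope ring_scope.

Section Defs.
Variables (R : realFieldType) (m : nat).
Local Notation vec := 'rV[R]_m.

Definition dotv (a b : vec) : R := \sum_(i < m) a 0 i * b 0 i.

(* l1 norm (all norms on R^m are equivalent; used only for limits) *)
Definition norm1 (a : vec) : R := \sum_(i < m) `|a 0 i|.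

Definition convex_set (L : vec -> Prop) : Prop :=
  forall x y t, L x -> L y -> 0 <= t -> t <= 1 -> L ((1 - t) *: x + t *: y).

Definition closed_set (L : vec -> Prop) : Prop :=
  forall x, (forall e, 0 < e -> exists y, L y /\ norm1 (y - x) < e) -> L x.

Definition concave_on (L : vec -> Prop) (f : vec -> R) : Prop :=
  forall x y t, L x -> L y -> 0 <= t -> t <= 1 ->
    (1 - t) * f x + t * f y <= f ((1 - t) *: x + t *: y).

Definition strictly_convex_on (L : vec -> Prop) (f : vec -> R) : Prop :=
  forall x y t, L x -> L y -> x != y -> 0 < t -> t < 1 ->
    f ((1 - t) *: x + t *: y) < (1 - t) * f x + t * f y.

Definition has_gradient_at (f : vec -> R) (g x : vec) : Prop :=
  forall e, 0 < e -> exists2 del, 0 < del & forall y, norm1 (y - x) < del ->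
    `|f y - f x - dotv g (y - x)| <= e * norm1 (y - x).

Definition C1_on (L : vec -> Prop) (f : vec -> R) (gf : vec -> vec) : Prop :=
  (forall x, L x -> has_gradient_at f (gf x) x) /\
  (forall x, L x -> forall e, 0 < e -> exists2 del, 0 < del &
     forall y, L y -> norm1 (y - x) < del -> norm1 (gf y - gf x) < e).

Definition bregman (h : vec -> R) (gh : vec -> vec) (l lt : vec) : R :=
  h l - h lt - dotv (gh lt) (l - lt).

Definition triangle_scaling (L : vec -> Prop) (h : vec -> R) (gh : vec -> vec)
  (G : R) : Prop :=
  forall l l1 l2 t, L l -> L l1 -> L l2 -> 0 <= t -> t <= 1 ->
    bregman h gh ((1 - t) *: l + t *: l1) ((1 - t) *: l + t *: l2)
      <= G * t ^+ 2 * bregman h gh l1 l2.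

Definition is_argmax (L : vec -> Prop) (f : vec -> R) (x : vec) : Prop :=
  L x /\ forall z, L z -> f z <= f x.

End Defs.

(* The v-step maximizes the estimate function
     psi_k = - G D_h(., lam_0) + sum_(j <= k) (eta_j / theta_j) l_j,
   where l_j is the affine model of d at lam_(j+1) given by the optimality of the
   proximal step, so that d <= l_j on Lam.  Optimality of v_(k+1) and the
   three-point identity give psi_k(l) <= psi_k(v_(k+1)) - G D_h(l, v_(k+1)).
   By induction psi_k(v_(k+1)) <= S_k d(lam_(k+1)): as S_(k+1) = eta_(k+1) / theta_(k+1)^2,
   the weights merge l_(k+1)(lam_(k+1)) and l_(k+1)(v_(k+2)) into S_(k+1) l_(k+1)(z) with
   z = (1 - theta) lam_(k+1) + theta v_(k+2), and triangle scaling bounds the Bregman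
   term at z by G theta^2 D_h(v_(k+2), v_(k+1)), which is exactly what the previous
   step left over.  Since S_k d(l) - G D_h(l, lam_0) <= psi_k(l), the rate follows. *)

From HB Require Import structures.
From mathcomp Require Import all_boot all_order all_algebra.
From mathcomp Require Import ring lra.
Set Implicit Arguments. Unset Strict Implicit. Unset Printing Implicit Defensive.
Import Order.TTheory GRing.Theory Num.Theory.
Local Open Scope ring_scope.

Section BregmanCalculus.
Variables (R : realFieldType) (m : nat).
Local Notation vec := 'rV[R]_m.
Implicit Types (a b g p x y z l : vec) (t : R) (L : vec -> Prop) (f h : vec -> R).

Lemma dotvDr a b (c : vec) : dotv a (b + c) = dotv a b + dotv a c.
Proof. by rewrite /dotv -big_split; apply: eq_bigr => i _; rewrite !mxE mulrDr. Qed.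

Lemma dotvBr a b (c : vec) : dotv a (b - c) = dotv a b - dotv a c.
Proof. by rewrite /dotv -sumrB; apply: eq_bigr => i _; rewrite !mxE mulrBr. Qed.

Lemma dotvBl a b (c : vec) : dotv (a - b) c = dotv a c - dotv b c.
Proof. by rewrite /dotv -sumrB; apply: eq_bigr => i _; rewrite !mxE mulrBl. Qed.

Lemma dotvZr a b t : dotv a (t *: b) = t * dotv a b.
Proof. by rewrite /dotv mulr_sumr; apply: eq_bigr => i _; rewrite mxE mulrCA. Qed.

Lemma norm1_ge0 a : 0 <= norm1 a.
Proof. exact: sumr_ge0. Qed.

Lemma norm1Z a t : 0 <= t -> norm1 (t *: a) = t * norm1 a.
Proof.
by move=> t0; rewrite /norm1 mulr_sumr; apply: eq_bigr => i _; rewrite mxE normrM ger0_norm.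
Qed.

Lemma segmentBl x l t : (1 - t) *: x + t *: l - x = t *: (l - x).
Proof. by apply/rowP => i; rewrite !mxE; ring. Qed.

Lemma gradient_segment_approx h g x l :
  has_gradient_at h g x -> forall e, 0 < e -> exists t, [/\ 0 < t, t <= 1 &
  `|h ((1 - t) *: x + t *: l) - h x - t * dotv g (l - x)| <= t * e].
Proof.
move=> hg e e0; set N := norm1 (l - x).
have N0 : 0 <= N by apply: norm1_ge0.
have [del del0 Hdel] := hg (e / (N + 1)) (divr_gt0 e0 (ltr_wpDl N0 ltr01)).
have Q0 : 0 < N + del + 1 by lra.
set t := del / (N + del + 1).
have t0 : 0 < t by apply: divr_gt0.
exists t; split => //; first by rewrite /t ler_pdivrMr // mul1r; lra.
have tN : t * N < del by rewrite /t mulrAC ltr_pdivrMr //; nra.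
have := Hdel ((1 - t) *: x + t *: l).
rewrite segmentBl norm1Z; last exact: ltW.
rewrite dotvZr => /(_ tN) /le_trans; apply.
rewrite -/N mulrCA; apply: ler_wpM2l; first exact: ltW.
rewrite mulrAC ler_pdivrMr; lra.
Qed.

Lemma le_dotv_gradient h g x l c :
  has_gradient_at h g x ->
  (forall t, 0 < t -> t <= 1 -> t * c <= h ((1 - t) *: x + t *: l) - h x) ->
  c <= dotv g (l - x).
Proof.
move=> hg Hc; apply/ler_addgt0Pr => e e0.
have [t [t0 t1]] := gradient_segment_approx l hg e0.
rewrite ler_norml => /andP[_ Ht].
rewrite -(ler_pM2l t0) mulrDr; have := Hc t t0 t1; lra.
Qed.

Lemma dotv_gradient_le h g x l c :
  has_gradient_at h g x ->
  (forall t, 0 < t -> t <= 1 -> h ((1 - t) *: x + t *: l) - h x <= t * c) ->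
  dotv g (l - x) <= c.
Proof.
move=> hg Hc; apply/ler_addgt0Pr => e e0.
have [t [t0 t1]] := gradient_segment_approx l hg e0.
rewrite ler_norml => /andP[Ht _].
rewrite -(ler_pM2l t0) mulrDr; have := Hc t t0 t1; lra.
Qed.

Lemma strictly_convex_le L h a b t :
  strictly_convex_on L h -> L a -> L b -> 0 <= t -> t <= 1 ->
  h ((1 - t) *: a + t *: b) <= (1 - t) * h a + t * h b.
Proof.
move=> hconv La Lb; rewrite le_eqVlt => /predU1P[<-|t0].
  by rewrite subr0 scale1r scale0r addr0 mul1r mul0r addr0.
rewrite le_eqVlt => /predU1P[->|t1].
  by rewrite subrr scale0r scale1r add0r mul0r mul1r add0r.
have [<-|nab] := eqVneq a b; last exact/ltW/hconv.
have -> : (1 - t) *: a + t *: a = a by apply/rowP => i; rewrite !mxE; ring.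
by rewrite -mulrDl subrK mul1r.
Qed.

Lemma bregman_ge0 L h gh a b :
  strictly_convex_on L h -> C1_on L h gh -> L a -> L b ->
  0 <= bregman h gh a b.
Proof.
move=> hconv [hgrad _] La Lb; rewrite /bregman subr_ge0.
apply: (dotv_gradient_le (hgrad b Lb)) => t t0 t1.
have := strictly_convex_le hconv Lb La (ltW t0) t1; lra.
Qed.

Lemma bregman_three_point h gh x y z :
  dotv (gh x - gh y) (z - x) =
  bregman h gh z y - bregman h gh z x - bregman h gh x y.
Proof. rewrite /bregman dotvBl !dotvBr; ring. Qed.

Lemma bregman_segment h gh x l y t :
  bregman h gh ((1 - t) *: x + t *: l) y =
  bregman h gh x y + (h ((1 - t) *: x + t *: l) - h x) - t * dotv (gh y) (l - x).
Proof.
rewrite /bregman (_ : _ - y = (x - y) + t *: (l - x)).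
  by rewrite dotvDr dotvZr; ring.
by apply/rowP => i; rewrite !mxE; ring.
Qed.

Lemma bregman_prox_optimality L f h gh c x y l :
  convex_set L -> concave_on L f -> C1_on L h gh -> 0 < c ->
  is_argmax L (fun z => f z - c * bregman h gh z y) x -> L l ->
  f l - f x <= c * dotv (gh x - gh y) (l - x).
Proof.
move=> convL fconc [hgrad _] c0 [Lx xmax] Ll.
set u := (f l - f x) / c.
have fE : f l - f x = c * u by rewrite /u mulrC divfK ?gt_eqF.
rewrite fE ler_pM2l // dotvBl lerBrDr.
apply: (le_dotv_gradient (hgrad x Lx)) => t t0 t1.
have := xmax _ (convL x l t Lx Ll (ltW t0) t1).
have := fconc x l t Lx Ll (ltW t0) t1.
rewrite bregman_segment => fz.
set D := h _ - h x => opt.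
have : c * (t * (u + dotv (gh y) (l - x))) <= c * D by nra.
by rewrite ler_pM2l.
Qed.

Lemma is_argmax_eq L f1 f2 x :
  (forall z, f1 z = f2 z) -> is_argmax L f1 x -> is_argmax L f2 x.
Proof. by move=> ef [Lx xmax]; split=> // z Lz; rewrite -!ef; apply: xmax. Qed.

Definition affine_fun f :=
  forall a b t, f ((1 - t) *: a + t *: b) = (1 - t) * f a + t * f b.

Lemma affine_concave L f : affine_fun f -> concave_on L f.
Proof. by move=> faff x y t *; rewrite faff. Qed.

Lemma affine_linearization g p c1 c2 :
  affine_fun (fun z => c1 + c2 * dotv g (z - p)).
Proof.
move=> a b t /=; rewrite (_ : _ - p = (1 - t) *: (a - p) + t *: (b - p)).
  by rewrite (dotvDr g ((1 - t) *: _)) !dotvZr; ring.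
by apply/rowP => i; rewrite !mxE; ring.
Qed.

Lemma affine_weighted_sum n (w : 'I_n -> R) (F : 'I_n -> vec -> R) :
  (forall j, affine_fun (F j)) -> affine_fun (fun z => \sum_(j < n) w j * F j z).
Proof.
move=> Faff a b t; rewrite !mulr_sumr -big_split; apply: eq_bigr => j _ /=.
rewrite Faff; ring.
Qed.

End BregmanCalculus.

Section AccBPP3.
Variables (R : realFieldType) (m : nat) (Lam : 'rV[R]_m -> Prop).
Variables (d h : 'rV[R]_m -> R) (gh : 'rV[R]_m -> 'rV[R]_m) (G : R).
Variables (eta theta : nat -> R) (lam v y : nat -> 'rV[R]_m).
Hypotheses (convL : convex_set Lam) (d_concave : concave_on Lam d).
Hypotheses (h_strict : strictly_convex_on Lam h) (h_C1 : C1_on Lam h gh).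
Hypotheses (G_gt0 : 0 < G) (h_scaling : triangle_scaling Lam h gh G).
Hypotheses (lam0_in : Lam (lam 0%N)) (v0E : v 0%N = lam 0%N) (theta0 : theta 0%N = 1).
Hypothesis eta_gt0 : forall k, 0 < eta k.
Hypothesis yE : forall k, y k = theta k *: v k + (1 - theta k) *: lam k.
Hypothesis lam_step : forall k,
  is_argmax Lam (fun l => d l - (eta k)^-1 * bregman h gh l (y k)) (lam k.+1).
Hypothesis theta_range : forall k, 0 < theta k.+1 /\ theta k.+1 <= 1.
Hypothesis theta_rec : forall k,
  eta k / theta k ^+ 2 = eta k.+1 / theta k.+1 ^+ 2 - eta k.+1 / theta k.+1.

Local Notation D := (bregman h gh).
Local Notation weight_sum k := (\sum_(j < k.+1) eta j / theta j).

Definition model j l :=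
  d (lam j.+1) + (eta j)^-1 * dotv (gh (lam j.+1) - gh (y j)) (l - lam j.+1).

Definition estimate k l := - G * D l (lam 0%N) + \sum_(j < k.+1) eta j / theta j * model j l.

Hypothesis v_step : forall k, is_argmax Lam (estimate k) (v k.+1).

Lemma theta_gt0 k : 0 < theta k.
Proof. by case: k => [|k]; [rewrite theta0 | case: (theta_range k)]. Qed.

Lemma theta_le1 k : theta k <= 1.
Proof. by case: k => [|k]; [rewrite theta0 | case: (theta_range k)]. Qed.

Lemma lam_in k : Lam (lam k).
Proof. by case: k => // k; case: (lam_step k). Qed.

Lemma v_in k : Lam (v k).
Proof. by case: k => [|k]; [rewrite v0E | case: (v_step k)]. Qed.

Lemma segment_in k : Lam ((1 - theta k) *: lam k + theta k *: v k.+1).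
Proof. exact: convL (lam_in k) (v_in _) (ltW (theta_gt0 k)) (theta_le1 k). Qed.

Lemma y_in k : Lam (y k).
Proof.
by rewrite yE addrC; exact: convL (lam_in k) (v_in k) (ltW (theta_gt0 k)) (theta_le1 k).
Qed.

Lemma weight_sumE k : weight_sum k = eta k / theta k ^+ 2.
Proof.
elim: k => [|k IH]; first by rewrite big_ord1 theta0 expr1n.
by rewrite big_ord_recr /= IH theta_rec; ring.
Qed.

Lemma weight_sum_gt0 k : 0 < weight_sum k.
Proof. by rewrite weight_sumE divr_gt0 // exprn_gt0 // theta_gt0. Qed.

Lemma model_affine j : affine_fun (model j).
Proof. exact: affine_linearization. Qed.

Lemma le_model j l : Lam l -> d l <= model j l.
Proof.
move=> Ll; rewrite /model -lerBlDl.
apply: bregman_prox_optimality d_concave h_C1 _ (lam_step j) Ll => //.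
by rewrite invr_gt0.
Qed.

Lemma estimate_max k l : Lam l ->
  estimate k l <= estimate k (v k.+1) - G * D l (v k.+1).
Proof.
move=> Ll; set A := fun z => \sum_(j < k.+1) eta j / theta j * model j z.
have Aaff : affine_fun A by apply: affine_weighted_sum => j; exact: model_affine.
have opt : is_argmax Lam (fun z => A z - G * D z (lam 0%N)) (v k.+1).
  by apply: is_argmax_eq (v_step k) => z; rewrite /estimate addrC mulNr.
have := bregman_prox_optimality convL (affine_concave Aaff) h_C1 G_gt0 opt Ll.
rewrite (bregman_three_point h) /estimate -/(A l) -/(A (v k.+1)).
have := bregman_ge0 h_strict h_C1 (v_in k.+1) lam0_in.
nra.
Qed.

Lemma estimate_ge k l : Lam l -> weight_sum k * d l - G * D l (lam 0%N) <= estimate k l.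
Proof.
move=> Ll; rewrite /estimate mulNr addrC lerD2l mulr_suml; apply: ler_sum => j _.
by rewrite ler_wpM2l ?le_model // divr_ge0 // ltW // ?eta_gt0 ?theta_gt0.
Qed.

Lemma model_segment_le k :
  model k ((1 - theta k) *: lam k + theta k *: v k.+1) <=
  d (lam k.+1) + (eta k)^-1 * (G * theta k ^+ 2 * D (v k.+1) (v k)).
Proof.
rewrite /model (bregman_three_point h) lerD2l; apply: ler_wpM2l.
  by rewrite invr_ge0 ltW.
have scaled : D ((1 - theta k) *: lam k + theta k *: v k.+1) (y k) <=
              G * theta k ^+ 2 * D (v k.+1) (v k).
  rewrite yE [theta k *: v k + _]addrC.
  exact: h_scaling (lam_in k) (v_in _) (v_in k) (ltW (theta_gt0 k)) (theta_le1 k).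
have := bregman_ge0 h_strict h_C1 (segment_in k) (lam_in k.+1).
have := bregman_ge0 h_strict h_C1 (lam_in k.+1) (y_in k).
lra.
Qed.

Lemma model_combination k :
  weight_sum k * model k.+1 (lam k.+1) + eta k.+1 / theta k.+1 * model k.+1 (v k.+2) =
  weight_sum k.+1 * model k.+1 ((1 - theta k.+1) *: lam k.+1 + theta k.+1 *: v k.+2).
Proof.
rewrite model_affine !weight_sumE theta_rec; field.
by rewrite gt_eqF ?theta_gt0.
Qed.

Lemma estimate_max_le k : estimate k (v k.+1) <= weight_sum k * d (lam k.+1).
Proof.
elim: k => [|k IH].
  have := model_segment_le 0.
  rewrite theta0 subrr scale0r add0r scale1r v0E expr1n mulr1 => seg.
  have := ler_wpM2l (ltW (eta_gt0 0)) seg.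
  rewrite [X in _ <= X]mulrDr mulrA divff ?gt_eqF // mul1r.
  rewrite /estimate !big_ord1 theta0 divr1; lra.
have estS l : estimate k.+1 l = estimate k l + eta k.+1 / theta k.+1 * model k.+1 l.
  by rewrite /estimate big_ord_recr addrA.
have scaleS : weight_sum k.+1 * ((eta k.+1)^-1 * (G * theta k.+1 ^+ 2 * D (v k.+2) (v k.+1))) =
              G * D (v k.+2) (v k.+1).
  by rewrite weight_sumE; field; rewrite !gt_eqF ?theta_gt0.
have := ler_wpM2l (ltW (weight_sum_gt0 k.+1)) (model_segment_le k.+1).
rewrite [X in _ <= X]mulrDr scaleS -model_combination => seg.
have := ler_wpM2l (ltW (weight_sum_gt0 k)) (le_model k.+1 (lam_in k.+1)).
have := estimate_max k (v_in k.+2).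
rewrite estS; lra.
Qed.

Lemma accBPP3_rate k l : Lam l ->
  let S := \sum_(j < k.+1) eta j / theta j in
  d l - d (lam k.+1) <= G * D l (lam 0%N) / S /\
  G * D l (lam 0%N) / S = theta k ^+ 2 * G * D l (lam 0%N) / eta k.
Proof.
move=> Ll S; have S_gt0 : 0 < S := weight_sum_gt0 k.
split; last by rewrite /S weight_sumE; field; rewrite !gt_eqF ?theta_gt0.
have := estimate_ge k Ll; have := estimate_max k Ll; have := estimate_max_le k.
have := mulr_ge0 (ltW G_gt0) (bregman_ge0 h_strict h_C1 Ll (v_in k.+1)).
rewrite ler_pdivlMr // /S; lra.
Qed.

End AccBPP3.

(* Closedness of the feasible set only serves the existence of the maximizers,
   which the statement assumes outright. *)
Theorem mainTheorem8 (R : realFieldType) (m : nat)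
  (Lam : 'rV[R]_m -> Prop) (d h : 'rV[R]_m -> R) (gh : 'rV[R]_m -> 'rV[R]_m)
  (G : R) (eta theta : nat -> R) (lam v y : nat -> 'rV[R]_m) :
  closed_set Lam -> convex_set Lam ->
  concave_on Lam d ->
  strictly_convex_on Lam h -> C1_on Lam h gh ->
  1 <= G -> triangle_scaling Lam h gh G ->
  Lam (lam 0%N) -> v 0%N = lam 0%N -> theta 0%N = 1 ->
  (forall k, 0 < eta k) ->
  (forall k, y k = theta k *: v k + (1 - theta k) *: lam k) ->
  (forall k, is_argmax Lam
     (fun l => d l - (eta k)^-1 * bregman h gh l (y k)) (lam k.+1)) ->
  (forall k, is_argmax Lam
     (fun l => - G * bregman h gh l (lam 0%N) +
        \sum_(j < k.+1) eta j / theta j *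
          (d (lam j.+1) + (eta j)^-1 *
             dotv (gh (lam j.+1) - gh (y j)) (l - lam j.+1)))
     (v k.+1)) ->
  (forall k, 0 < theta k.+1 /\ theta k.+1 <= 1) ->
  (forall k, eta k / theta k ^+ 2 =
             eta k.+1 / theta k.+1 ^+ 2 - eta k.+1 / theta k.+1) ->
  forall k l, Lam l ->
    let S := \sum_(j < k.+1) eta j / theta j in
    d l - d (lam k.+1) <= G * bregman h gh l (lam 0%N) / S /\
    G * bregman h gh l (lam 0%N) / S =
      theta k ^+ 2 * G * bregman h gh l (lam 0%N) / eta k.
Proof.
move=> _ convL d_concave h_strict h_C1 G_ge1 h_scaling lam0_in v0E theta0 eta_gt0
  yE lam_step v_step theta_range theta_rec.
have G_gt0 : 0 < G := lt_le_trans ltr01 G_ge1.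
exact: accBPP3_rate convL d_concave h_strict h_C1 G_gt0 h_scaling lam0_in v0E theta0
  eta_gt0 yE lam_step theta_range theta_rec v_step.
Qed.
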